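(* Let $X$ be a real Banach space, $Y$ a closed subspace of $X$, $(\Omega,\Sigma,\mu)$ a complete probability space, $1\leq p<\infty$ and $n$ a positive integer. Let $f_1,\ldots,f_n\in L_p(\mu,X)$ and let $g:\Omega\to Y$ be a $\mu$-measurable function such that for almost all $s\in\Omega$, $g(s)$ is a relative $p$-center of $\{f_1(s),\ldots,f_n(s)\}$ in $Y$. Then $g\in L_p(\mu,Y)$ and $g$ is a relative $p$-center of $\{f_1,\ldots,f_n\}\subset L_p(\mu,X)$ in $L_p(\mu,Y)$, i.e. $\sum_{i=1}^n\|f_i-g\|_p^p\leq\sum_{i=1}^n\|f_i-h\|_p^p$ for all $h\in L_p(\mu,Y)$.
   Context: A function $\Omega\to X$ is $\mu$-measurable (strongly measurable) if it is the $\mu$-a.e. limit of a sequence of $\Sigma$-simple functions. $L_p(\mu,X)$ denotes the Banach space of Bochner $p$-integrable functions $\Omega\to X$ with norm $\|f\|_p=(\int_\Omega\|f(s)\|^p\,d\mu(s))^{1/p}$, and $L_p(\mu,Y)$ the subspace of those with values in $Y$. For a subset $Y$ of a normed space $X$, a finite set $\{a_1,\ldots,a_n\}\subset X$ and $m\in[1,\infty)$, a point $y_0\in Y$ is a relative $m$-center of $\{a_1,\ldots,a_n\}$ in $Y$ if $\sum_{i=1}^n\|a_i-y_0\|^m\leq\sum_{i=1}^n\|a_i-y\|^m$ for all $y\in Y$. *)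

From HB Require Import structures.
From mathcomp Require Import all_boot all_order all_algebra.
From mathcomp Require Import all_classical all_reals all_analysis.
Set Implicit Arguments. Unset Strict Implicit. Unset Printing Implicit Defensive.
Import Order.TTheory GRing.Theory Num.Theory.
Import numFieldNormedType.Exports.
Local Open Scope classical_set_scope.
Local Open Scope ring_scope.

Section Defs.
Context {R : realType} {d : measure_display} {T : measurableType d}
        {X : normedModType R}.

Definition is_linear_subspace (Y : set X) : Prop :=
  Y 0 /\ (forall x y, Y x -> Y y -> Y (x + y)) /\
  (forall (a : R) x, Y x -> Y (a *: x)).

Definition sigma_simple (f : T -> X) : Prop :=
  finite_set (range f) /\ (forall x : X, measurable (f @^-1` [set x])).

(* mu-measurable (strongly measurable): mu-a.e. limit of Sigma-simple functions *)
Definition strongly_measurable (mu : {measure set T -> \bar R}) (f : T -> X) : Prop :=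
  exists u : nat -> T -> X, (forall k, sigma_simple (u k)) /\
    {ae mu, forall s, (fun k => u k s) @ \oo --> f s}.

Definition Lp_norm_pow (mu : {measure set T -> \bar R}) (p : R) (f : T -> X) : \bar R :=
  (\int[mu]_s ((`|f s| `^ p)%:E))%E.

Definition in_Lp (mu : {measure set T -> \bar R}) (p : R) (f : T -> X) : Prop :=
  strongly_measurable mu f /\ (Lp_norm_pow mu p f < +oo)%E.

Definition in_LpY (mu : {measure set T -> \bar R}) (p : R) (Y : set X) (f : T -> X) : Prop :=
  in_Lp mu p f /\ (forall s, Y (f s)).

Definition relative_center (Y : set X) (n : nat) (a : 'I_n -> X) (m : R) (y0 : X) : Prop :=
  Y y0 /\ forall y, Y y ->
    \sum_(i < n) `|a i - y0| `^ m <= \sum_(i < n) `|a i - y| `^ m.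

End Defs.

From HB Require Import structures.
From mathcomp Require Import all_boot all_order all_algebra.
From mathcomp Require Import all_classical all_reals all_analysis.
From mathcomp Require Import lra.
From mathcomp Require Import measurable_realfun.
From mathcomp Require measurable_fun_approximation.
Import Order.TTheory GRing.Theory Num.Theory.
Import numFieldNormedType.Exports.
Local Open Scope classical_set_scope.
Local Open Scope ring_scope.

(* Minimality is pointwise, so integrating the pointwise inequality gives the
   inequality of the p-th powers of the L_p norms.  Integrability of g comes
   from comparing g(s) with the competitor 0 in Y:
   |g(s)| <= |f_1(s)| + |f_1(s) - g(s)| and |f_1(s) - g(s)|^p <= sum_i |f_i(s)|^p,
   so |g|^p is dominated by a multiple of sum_i |f_i|^p.  Completeness of mu
   makes the a.e. limit of simple functions measurable. *)

Lemma powR_addr_le {R : realType} {a b p : R} : 0 <= a -> 0 <= b -> 0 <= p ->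
  (a + b) `^ p <= 2 `^ p * (a `^ p + b `^ p).
Proof.
wlog ab : a b / a <= b => [wlog_ab a0 b0 p0|a0 b0 p0].
  have [/wlog_ab|/ltW/wlog_ab] := leP a b; first exact.
  by rewrite addrC (addrC (a `^ p)); apply.
apply: (@le_trans _ _ ((2 * b) `^ p)).
  by apply: ge0_ler_powR => //; rewrite ?nnegrE; lra.
by rewrite powRM // ler_wpM2l ?powR_ge0 // lerDr powR_ge0.
Qed.

Section RelativeCenter.
Context {R : realType} {X : normedModType R}.

Lemma relative_center_norm_le {Y : set X} {n} {a : 'I_n -> X} {p : R} {y0 : X}
    (i0 : 'I_n) : 0 <= p -> Y 0 -> relative_center Y a p y0 ->
  `|y0| `^ p <= 2 `^ p * 2 * \sum_(i < n) `|a i| `^ p.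
Proof.
move=> p0 Y0 [_ y0_min].
have term_le (b : 'I_n -> X) : `|b i0| `^ p <= \sum_(i < n) `|b i| `^ p.
  by rewrite (bigD1 i0) //= lerDl sumr_ge0 // => i _; rewrite powR_ge0.
have dist_le : `|a i0 - y0| `^ p <= \sum_(i < n) `|a i| `^ p.
  have a_subr0 : \sum_(i < n) `|a i - 0| `^ p = \sum_(i < n) `|a i| `^ p.
    by apply: eq_bigr => i _; rewrite subr0.
  rewrite -a_subr0; apply: le_trans (y0_min 0 Y0).
  exact: (term_le (fun i => a i - y0)).
apply: (@le_trans _ _ ((`|a i0| + `|a i0 - y0|) `^ p)).
  apply: ge0_ler_powR; rewrite ?nnegrE ?addr_ge0 //.
  by have := ler_normB (a i0) (a i0 - y0); rewrite subKr.
apply: le_trans (powR_addr_le (normr_ge0 _) (normr_ge0 _) p0) _.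
by rewrite -mulrA ler_wpM2l ?powR_ge0 // mulr2n mulrDl !mul1r lerD // term_le.
Qed.

End RelativeCenter.

Section StronglyMeasurable.
Context {R : realType} {d : measure_display} {T : measurableType d}
  {X : normedModType R}.
Context {mu : {measure set T -> \bar R}}.

Lemma sigma_simple_measurable_normB {u v : T -> X} :
  sigma_simple u -> sigma_simple v -> measurable_fun setT (fun s => `|u s - v s|).
Proof.
move=> [u_fin u_meas] [v_fin v_meas] _ B _; rewrite setTI.
have -> : (fun s => `|u s - v s|) @^-1` B =
    \bigcup_(a in range u) \bigcup_(b in range v)
      (if pselect (B `|a - b|) then u @^-1` [set a] `&` v @^-1` [set b] else set0).
  apply/seteqP; split => [s /= Bs|s [a [s1 _ <-] [b [s2 _ <-]]]].
    by exists (u s); [exists s|exists (v s); [exists s|case: pselect]].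
  by case: pselect => // Bab [/= -> ->].
apply: fin_bigcup_measurable => // a _; apply: fin_bigcup_measurable => // b _.
by case: pselect => ?; [exact: measurableI|exact: measurable0].
Qed.

Lemma strongly_measurable_cst (x : X) : strongly_measurable mu (cst x).
Proof.
exists (fun _ => cst x); split; last by apply: aeW => s; exact: cvg_cst.
move=> _; split=> [|y]; last by rewrite preimage_cst; case: ifP.
by apply: sub_finite_set (finite_set1 x) => _ [s _ <-].
Qed.

Hypothesis mu_complete : measure_is_complete mu.

Lemma strongly_measurable_normB {f g : T -> X} :
  strongly_measurable mu f -> strongly_measurable mu g ->
  measurable_fun setT (fun s => `|f s - g s|).
Proof.
move=> [u [u_simple u_cvg]] [v [v_simple v_cvg]].
have [N [mN muN0 sub_N]] : mu.-negligible
    (~` [set s | (fun k => u k s) @ \oo --> f s /\ (fun k => v k s) @ \oo --> g s]).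
  by apply: negligibleS (negligibleU u_cvg v_cvg) => s /= /not_andP [] ?; [left|right].
rewrite -(setUv N); apply/measurable_funU => //; first exact: measurableC.
split=> [_ B _|].
  by apply: mu_complete; exists N; split => //; exact: subIsetl.
apply: (@measurable_fun_cvg _ _ _ _ (fun k s => `|u k s - v k s|)).
  by move=> k; apply: measurable_funS (sigma_simple_measurable_normB (u_simple k) (v_simple k)).
move=> s Ns; have [/= u_s v_s] := contrapT (fun nc => Ns (sub_N s nc)).
by apply: cvg_norm; exact: cvgB.
Qed.

Lemma strongly_measurable_norm {f : T -> X} :
  strongly_measurable mu f -> measurable_fun setT (fun s => `|f s|).
Proof.
move=> f_sm; have := strongly_measurable_normB f_sm (strongly_measurable_cst 0).
by under eq_fun do rewrite subr0.
Qed.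

End StronglyMeasurable.

Section LpNormPow.
Context {R : realType} {d : measure_display} {T : measurableType d}
  {X : normedModType R}.
Context {mu : {measure set T -> \bar R}}.

Lemma measurable_sum_powR n (h : 'I_n -> T -> R) (p : R) :
  (forall i, measurable_fun setT (h i)) ->
  measurable_fun setT (fun s => \sum_(i < n) h i s `^ p).
Proof.
move=> h_meas; apply: measurable_fun_approximation.measurable_sum => i.
exact: measurableT_comp (measurable_powR p) (h_meas i).
Qed.

Lemma Lp_norm_pow_sum n (F : 'I_n -> T -> X) (p : R) :
  (forall i, measurable_fun setT (fun s => `|F i s|)) ->
  (\sum_(i < n) Lp_norm_pow mu p (F i) =
   \int[mu]_s (\sum_(i < n) `|F i s| `^ p)%:E)%E.
Proof.
move=> F_meas; rewrite /Lp_norm_pow -ge0_integral_sum //.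
- by apply: eq_integral => s _; rewrite sumEFin.
- move=> i; apply/measurable_EFinP.
  exact: measurableT_comp (measurable_powR p) (F_meas i).
Qed.

Lemma Lp_norm_pow_sum_le_ae n (F G : 'I_n -> T -> X) (p : R) :
  (forall i, measurable_fun setT (fun s => `|F i s|)) ->
  (forall i, measurable_fun setT (fun s => `|G i s|)) ->
  {ae mu, forall s, \sum_(i < n) `|F i s| `^ p <= \sum_(i < n) `|G i s| `^ p} ->
  (\sum_(i < n) Lp_norm_pow mu p (F i) <= \sum_(i < n) Lp_norm_pow mu p (G i))%E.
Proof.
move=> F_meas G_meas FG_le; rewrite !Lp_norm_pow_sum //.
apply: ae_ge0_le_integral => //.
- by move=> s _; rewrite lee_fin sumr_ge0 // => i _; rewrite powR_ge0.
- exact/measurable_EFinP/measurable_sum_powR.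
- by move=> s _; rewrite lee_fin sumr_ge0 // => i _; rewrite powR_ge0.
- exact/measurable_EFinP/measurable_sum_powR.
- by apply: filterS FG_le => s FG_s _; rewrite lee_fin.
Qed.

Lemma Lp_norm_pow_lty_ae {n} {F : 'I_n -> T -> X} {g : T -> X} {p : R} (c : R) :
  0 <= c -> measurable_fun setT (fun s => `|g s|) ->
  (forall i, measurable_fun setT (fun s => `|F i s|)) ->
  {ae mu, forall s, `|g s| `^ p <= c * \sum_(i < n) `|F i s| `^ p} ->
  (forall i, Lp_norm_pow mu p (F i) < +oo)%E ->
  (Lp_norm_pow mu p g < +oo)%E.
Proof.
move=> c0 g_meas F_meas g_le F_lty.
have sum_ge0 s : 0 <= \sum_(i < n) `|F i s| `^ p.
  by rewrite sumr_ge0 // => i _; rewrite powR_ge0.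
apply: (@le_lt_trans _ _ (\int[mu]_s (c%:E * (\sum_(i < n) `|F i s| `^ p)%:E))%E).
  apply: ae_ge0_le_integral => //.
  - exact/measurable_EFinP/(measurableT_comp (measurable_powR p)).
  - by move=> s _; rewrite -EFinM lee_fin mulr_ge0.
  - exact/measurable_EFinP/measurable_funM/measurable_sum_powR.
  - by apply: filterS g_le => s g_s _; rewrite -EFinM lee_fin.
rewrite ge0_integralZl_EFin //; last exact/measurable_EFinP/measurable_sum_powR.
  by rewrite -Lp_norm_pow_sum // lte_mul_pinfty // lte_sum_pinfty.
by move=> s _; rewrite lee_fin.
Qed.

End LpNormPow.

Theorem mainTheorem4 (R : realType) (X : completeNormedModType R) (Y : set X)
  (d : measure_display) (T : measurableType d) (mu : probability T R)
  (p : R) (n : nat) (f : 'I_n -> T -> X) (g : T -> X) :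
  closed Y -> is_linear_subspace Y ->
  measure_is_complete mu ->
  1 <= p -> (0 < n)%N ->
  (forall i, in_Lp mu p (f i)) ->
  strongly_measurable mu g -> (forall s, Y (g s)) ->
  {ae mu, forall s, relative_center Y (fun i => f i s) p (g s)} ->
  in_LpY mu p Y g /\
  (forall h, in_LpY mu p Y h ->
     (\sum_(i < n) Lp_norm_pow mu p (fun s => (f i s - g s)%R)
        <= \sum_(i < n) Lp_norm_pow mu p (fun s => (f i s - h s)%R))%E).
Proof.
move=> _ [Y0 _] mu_complete p_ge1 n_gt0 f_Lp g_sm gY g_center.
have p_ge0 : 0 <= p by apply: le_trans p_ge1.
have f_sm i := (f_Lp i).1.
have f_norm i := strongly_measurable_norm mu_complete (f_sm i).
have fB_norm h : strongly_measurable mu h ->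
    forall i, measurable_fun setT (fun s => `|f i s - h s|).
  by move=> h_sm i; exact: (strongly_measurable_normB mu_complete (f_sm i) h_sm).
split.
  split=> //; split=> //.
  apply: (Lp_norm_pow_lty_ae (2 `^ p * 2)) (fun i => (f_Lp i).2) => //.
  - exact: (strongly_measurable_norm mu_complete g_sm).
  apply: filterS g_center => s g_s_center.
  exact: relative_center_norm_le (Ordinal n_gt0) p_ge0 Y0 g_s_center.
move=> h [[h_sm _] hY].
apply: Lp_norm_pow_sum_le_ae; [exact: fB_norm|exact: fB_norm|].
by apply: filterS g_center => s [_ g_s_min]; exact: g_s_min.
Qed.
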